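(* Let $\mathcal{T}$ be a countable directed poset, $X:\mathcal{T}\to\mathbf{Set}_*$ a diagram of pointed sets satisfying the Mittag-Leffler condition, and $A$ an abelian group. Then: (1) If $A$ is $p$-divisible for a prime $p$, then $G(X,A)$ and $H(X,A)$ are $p$-divisible. (2) If $A$ is divisible, then $G(X,A)$ and $H(X,A)$ are divisible. (3) If $A$ is almost divisible, then $G(X,A)$ and $H(X,A)$ are almost divisible.
   Context: A directed poset is regarded as a category with a single morphism $t\to s$ whenever $t\ge s$. For a pointed set $Y$, $Y\wedge A:=\bigoplus_{Y\setminus\{*\}}A$ (finitely supported pointed maps $Y\to A$), functorial via $f_*(sv)=f(s)v$, where $sv$ is the element with value $v$ at $s$ ($*v=0$). $G(X,A):=\lim_\mathcal{T}(X\wedge A)$; $K(X,A)$ is the image of the injective natural map $\rho:(\lim_\mathcal{T}X)\wedge A\to G(X,A)$, $\rho(xv)(t)=x(t)v$; $H(X,A):=G(X,A)/K(X,A)$. $X$ satisfies the Mittag-Leffler condition if for every $t$ there is $s\ge t$ with $\mathrm{Im}(X(s)\to X(t))=\mathrm{Im}(X(r)\to X(t))$ for all $r\ge s$. An abelian group is almost divisible iff it is the direct sum of a divisible group and a bounded group (equivalently, $l_p(A)=0$ for almost all primes $p$ and $l_p(A)<\omega$ for all primes $p$, where $l_p$ is the $p$-length). *)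

From HB Require Import structures.
From mathcomp Require Import all_boot all_order all_algebra.
From mathcomp Require Import boolp classical_sets functions.
From Stdlib Require List.
Set Implicit Arguments. Unset Strict Implicit. Unset Printing Implicit Defensive.
Import Order.TTheory GRing.Theory.
Local Open Scope ring_scope.

(* Subquotients P/K of an abelian group V (P, K subgroups, K <= P),   *)
(* described through predicates on V.                                 *)
Definition subgrp (V : zmodType) (P : V -> Prop) :=
  P 0 /\ forall x y, P x -> P y -> P (x - y).

Definition sq_ndiv (V : zmodType) (n : nat) (P K : V -> Prop) :=
  forall g, P g -> exists h, P h /\ K (g - h *+ n).

Definition sq_div (V : zmodType) (P K : V -> Prop) :=
  forall n : nat, (0 < n)%N -> sq_ndiv n P K.

Definition sq_bounded (V : zmodType) (P K : V -> Prop) :=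
  exists n : nat, (0 < n)%N /\ forall g, P g -> K (g *+ n).

(* P/K is almost divisible: P/K = D/K (+) B/K (internal direct sum)
   with D/K divisible and B/K bounded. *)
Definition sq_almost_div (V : zmodType) (P K : V -> Prop) :=
  exists D B : V -> Prop,
    subgrp D /\ subgrp B /\
    (forall x, K x -> D x /\ B x) /\
    (forall x, D x -> P x) /\ (forall x, B x -> P x) /\
    (forall g, P g -> exists d b, [/\ D d, B b & g = d + b]) /\
    (forall x, D x -> B x -> K x) /\
    sq_div D K /\ sq_bounded B K.

(* The same notions for an abelian group A itself (A = A / 0). *)
Definition whole (V : zmodType) : V -> Prop := fun _ => True.
Definition zero_sg (V : zmodType) : V -> Prop := fun x => x = 0.

Definition p_divisible (A : zmodType) (p : nat) := sq_ndiv p (@whole A) (@zero_sg A).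
Definition divisible (A : zmodType) := sq_div (@whole A) (@zero_sg A).
Definition almost_divisible (A : zmodType) := sq_almost_div (@whole A) (@zero_sg A).

Definition countable_type (T : Type) := exists c : T -> nat, injective c.

Definition directed (d : Order.disp_t) (T : porderType d) :=
  inhabited T /\ forall s t : T, exists r : T, (s <= r)%O /\ (t <= r)%O.

(* A diagram X : T -> Set_* ; one morphism t -> s whenever t >= s, so
   f t s h : X t -> X s for h : s <= t.  Pointed sets are eqTypes with a
   distinguished point pt t. *)
Definition pointed_diagram (d : Order.disp_t) (T : porderType d)
  (X : T -> eqType) (pt : forall t, X t)
  (f : forall t s : T, (s <= t)%O -> X t -> X s) :=
  [/\ (forall t s (h : (s <= t)%O), f t s h (pt t) = pt s),
      (forall t (h : (t <= t)%O) x, f t t h x = x) &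
      (forall t r s (h1 : (r <= t)%O) (h2 : (s <= r)%O) (h3 : (s <= t)%O) x,
          f r s h2 (f t r h1 x) = f t s h3 x)].

Definition image_of (Y Z : Type) (h : Y -> Z) : Z -> Prop :=
  fun z => exists y, h y = z.

Definition mittag_leffler (d : Order.disp_t) (T : porderType d)
  (X : T -> eqType) (f : forall t s : T, (s <= t)%O -> X t -> X s) :=
  forall t : T, exists s : T, exists hst : (t <= s)%O,
    forall (r : T) (hsr : (s <= r)%O) (htr : (t <= r)%O) (y : X t),
      image_of (f r t htr) y <-> image_of (f s t hst) y.

(* Y /\ A : finitely supported pointed maps Y -> A, and pushforward     *)
Definition fin_supp (Y : eqType) (A : zmodType) (g : Y -> A) :=
  exists s : seq Y, forall y, g y != 0 -> y \in s.

Definition smash_elt (Y : eqType) (y0 : Y) (A : zmodType) (g : Y -> A) :=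
  g y0 = 0 /\ fin_supp g.

Definition pushes (Y Z : eqType) (A : zmodType) (h : Y -> Z) (z0 : Z)
  (g : Y -> A) (g' : Z -> A) :=
  forall s : seq Y, uniq s -> (forall y, g y != 0 -> y \in s) ->
    forall z, g' z = if z == z0 then 0 else \sum_(y <- s | h y == z) g y.

(* Elements of prod_t (X t /\ A) are encoded as functions {t & X t} -> A. *)
Definition comp_at (d : Order.disp_t) (T : porderType d) (X : T -> eqType)
  (A : zmodType) (g : {t : T & X t} -> A) (t : T) : X t -> A :=
  fun y => g (existT _ t y).
Arguments comp_at {d T X A} g t _.

(* G(X,A) = lim_T (X /\ A) *)
Definition G_pred (d : Order.disp_t) (T : porderType d)
  (X : T -> eqType) (pt : forall t, X t)
  (f : forall t s : T, (s <= t)%O -> X t -> X s) (A : zmodType)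
  (g : {t : T & X t} -> A) : Prop :=
  (forall t, smash_elt (pt t) (comp_at g t)) /\
  (forall t s (h : (s <= t)%O),
      pushes (f t s h) (pt s) (comp_at g t) (comp_at g s)).

Definition lim_elt (d : Order.disp_t) (T : porderType d)
  (X : T -> eqType) (f : forall t s : T, (s <= t)%O -> X t -> X s)
  (x : forall t, X t) : Prop :=
  forall t s (h : (s <= t)%O), f t s h (x t) = x s.

(* K(X,A) = image of rho : (lim X) /\ A -> G(X,A); an element of
   (lim X) /\ A is a finite formal sum sum_i x_i v_i, and
   rho(sum_i x_i v_i)(t) = sum_i x_i(t) v_i  (with *v = 0). *)
Definition K_pred (d : Order.disp_t) (T : porderType d)
  (X : T -> eqType) (pt : forall t, X t)
  (f : forall t s : T, (s <= t)%O -> X t -> X s) (A : zmodType)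
  (g : {t : T & X t} -> A) : Prop :=
  G_pred pt f g /\
  exists l : seq ((forall t, X t) * A),
    (forall i, List.In i l -> lim_elt f i.1) /\
    forall t (y : X t),
      comp_at g t y = if y == pt t then 0
                      else \sum_(i <- l | i.1 t == y) i.2.

From HB Require Import structures.
From mathcomp Require Import all_boot all_order all_algebra.
From mathcomp Require Import boolp classical_sets functions.
Import Order.TTheory GRing.Theory.
Local Open Scope ring_scope.
Set Implicit Arguments. Unset Strict Implicit. Unset Printing Implicit Defensive.

(* An element of G(X,A) is a family of finitely supported pointed maps
   g_t : X t -> A, compatible under pushforward along the transition maps.
   Since T is countable and directed and X is Mittag-Leffler, there is a
   cofinal tower u_0 <= u_1 <= ... in T along which the stable images
   Y_n = Im(X(u_{n+1}) -> X(u_n)) surject onto each other, and a compatible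
   family on the tower extends to an element of G(X,A).

   Roots (G_root): if g takes values in an m-divisible subgroup S of A, choose
   pointwise m-th roots at every level.  A root h_n at level n differs from the
   pushforward of the chosen root at level n+1 by an m-torsion error supported
   on Y_n; lifting this error along a section Y_n -> Y_{n+1} corrects the root
   at level n+1.  The resulting compatible family gives h with m h = g.  This
   proves parts (1) and (2), since g - m h = 0 lies in K(X,A).

   Part (3): for A = D (+) B with D divisible and B bounded, the pointwise
   projection onto D is an idempotent additive endomorphism of G(X,A) that
   preserves K(X,A), whose fixed points are divisible (by G_root) and whose
   kernel is bounded; the criterion almost_div_of_projection then splits G/K. *)

Section Subgroups.
Variables (V : zmodType) (P : V -> Prop).
Hypothesis sP : subgrp P.

Lemma sg0 : P 0. Proof. by case: sP. Qed.

Lemma sgB x y : P x -> P y -> P (x - y). Proof. by case: sP => _; apply. Qed.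

Lemma sgN x : P x -> P (- x).
Proof. by move=> Px; rewrite -sub0r; apply: sgB => //; apply: sg0. Qed.

Lemma sgD x y : P x -> P y -> P (x + y).
Proof. by move=> Px Py; rewrite -[y]opprK; apply: sgB => //; apply: sgN. Qed.

Lemma sg_sum (I : Type) (r : seq I) (Q : pred I) (F : I -> V) :
  (forall i, P (F i)) -> P (\sum_(i <- r | Q i) F i).
Proof. by move=> PF; apply: big_ind => //; [apply: sg0 | apply: sgD]. Qed.

Lemma sgMn x n : P x -> P (x *+ n).
Proof. by move=> Px; elim: n => [|n IH]; [apply: sg0 | rewrite mulrS; apply: sgD]. Qed.

End Subgroups.

Lemma subgrp_zero (V : zmodType) : subgrp (@zero_sg V).
Proof. by split=> // x y -> ->; rewrite subrr. Qed.

Lemma subgrp_whole (V : zmodType) : subgrp (@whole V).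
Proof. by []. Qed.

Section Pushforward.
Variable A : zmodType.
Implicit Types (Y Z W : eqType).

Lemma subfE (I : Type) (g1 g2 : I -> A) i : (g1 - g2) i = g1 i - g2 i.
Proof. by []. Qed.

Definition covers Y (g : Y -> A) (s : seq Y) := uniq s /\ forall y, g y != 0 -> y \in s.

Lemma covers_undup Y (g : Y -> A) s :
  (forall y, g y != 0 -> y \in s) -> covers g (undup s).
Proof. by move=> gs; split=> [|y /gs]; rewrite ?undup_uniq ?mem_undup. Qed.

Lemma fin_supp_covers Y (g : Y -> A) s : covers g s -> fin_supp g.
Proof. by case=> _ gs; exists s. Qed.

Lemma sum_pred1_seq (I : eqType) (r : seq I) x (F : I -> A) : uniq r ->
  \sum_(y <- r | y == x) F y = if x \in r then F x else 0.
Proof.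
move=> ur; case: ifP => xr; last by rewrite big1_seq // => y /andP[/eqP-> ]; rewrite xr.
rewrite (big_rem x) //= eqxx big1_seq ?addr0 // => y /andP[/eqP-> ].
by rewrite mem_rem_uniqF.
Qed.

Lemma sum_covers_indep Y (g : Y -> A) (P : pred Y) s1 s2 :
  covers g s1 -> covers g s2 -> \sum_(y <- s1 | P y) g y = \sum_(y <- s2 | P y) g y.
Proof.
have drop0 s : \sum_(y <- s | P y) g y = \sum_(y <- [seq y <- s | g y != 0] | P y) g y.
  rewrite big_filter_cond big_mkcondl; apply: eq_bigr => y _.
  by case: eqP => // ->.
move=> [u1 c1] [u2 c2]; rewrite drop0 [RHS]drop0; apply: perm_big.
apply: uniq_perm; rewrite ?filter_uniq // => y; rewrite !mem_filter.
by case: (boolP (g y != 0)) => //= /[dup] /c1 -> /c2 ->.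
Qed.

Definition psum Y Z (h : Y -> Z) (z0 : Z) (s : seq Y) (g : Y -> A) : Z -> A :=
  fun z => if z == z0 then 0 else \sum_(y <- s | h y == z) g y.

Lemma psum_indep Y Z (h : Y -> Z) z0 (g : Y -> A) s1 s2 :
  covers g s1 -> covers g s2 -> psum h z0 s1 g = psum h z0 s2 g.
Proof. by move=> c1 c2; apply/funext => z; rewrite /psum (sum_covers_indep _ c1 c2). Qed.

Definition cov Y (g : Y -> A) : seq Y :=
  if pselect (exists s, covers g s) is left P then projT1 (cid P) else [::].

Lemma covP Y (g : Y -> A) : fin_supp g -> covers g (cov g).
Proof.
case=> s gs; rewrite /cov; case: pselect => [P|[]]; first exact: projT2 (cid P).
by exists (undup s); apply: covers_undup.
Qed.

Definition push Y Z (h : Y -> Z) (z0 : Z) (g : Y -> A) : Z -> A := psum h z0 (cov g) g.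

Lemma push_psum Y Z (h : Y -> Z) z0 (g : Y -> A) s :
  covers g s -> push h z0 g = psum h z0 s g.
Proof. by move=> gs; apply: psum_indep (gs); apply/covP/(fin_supp_covers gs). Qed.

Lemma pushesP Y Z (h : Y -> Z) z0 (g : Y -> A) g' :
  fin_supp g -> pushes h z0 g g' <-> g' = push h z0 g.
Proof.
move/covP=> gc; split=> [P|-> s us gs z]; last by rewrite (push_psum _ _ (conj us gs)).
by apply/funext=> z; rewrite (P _ gc.1 gc.2).
Qed.

Lemma push_pt Y Z (h : Y -> Z) z0 (g : Y -> A) : push h z0 g z0 = 0.
Proof. by rewrite /push /psum eqxx. Qed.

Lemma push_supp Y Z (h : Y -> Z) z0 (g : Y -> A) z :
  push h z0 g z != 0 -> exists y, [/\ y \in cov g, h y = z & g y != 0].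
Proof.
case: (pselect (exists y, [/\ y \in cov g, h y = z & g y != 0])) => // nofibre.
rewrite /push /psum; case: ifP => _; first by rewrite eqxx.
rewrite big1_seq ?eqxx // => y /andP[/eqP hy ys]; apply/eqP.
by apply: contra_notT nofibre => gy; exists y.
Qed.

Lemma push_covers Y Z (h : Y -> Z) z0 (g : Y -> A) :
  covers (push h z0 g) (undup (map h (cov g))).
Proof. by apply: covers_undup => z /push_supp [y [ys <- _]]; apply: map_f. Qed.

Lemma push_fin Y Z (h : Y -> Z) z0 (g : Y -> A) : fin_supp (push h z0 g).
Proof. exact: fin_supp_covers (push_covers _ _ _). Qed.

Lemma push_comp Y Z W (a : Z -> W) (b : Y -> Z) z0 w0 (g : Y -> A) :
  fin_supp g -> a z0 = w0 -> push a w0 (push b z0 g) = push (a \o b) w0 g.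
Proof.
move=> /covP [us cs] az0; rewrite (push_psum _ _ (push_covers _ _ _)).
apply/funext=> w; rewrite [push (a \o b) _ _]/push /psum /=; case: eqP => // /eqP ww.
rewrite (eq_bigr (fun z => \sum_(y <- cov g | b y == z) g y)); last first.
  by move=> z /eqP azw; rewrite /push /psum; case: eqP => // zz0; case/eqP: ww; rewrite -azw zz0.
rewrite (exchange_big_dep (fun y => a (b y) == w)) /=; last by move=> z y /eqP <- /eqP ->.
rewrite big_seq_cond [RHS]big_seq_cond; apply: eq_bigr => y /andP[ys /eqP abw].
rewrite (eq_bigl (fun z => z == b y)) => [|z].
  by rewrite sum_pred1_seq ?undup_uniq // mem_undup map_f.
by case: (eqVneq z (b y)) => [->|_]; rewrite ?abw ?eqxx ?andbF.
Qed.

Lemma push_id_on Y (h : Y -> Y) y0 (g : Y -> A) :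
  fin_supp g -> g y0 = 0 -> (forall y, g y != 0 -> h y = y) -> push h y0 g = g.
Proof.
move=> /covP [us cs] g0 hid; apply/funext=> z; rewrite /push /psum.
case: eqP => [->//|_].
rewrite big_mkcond (eq_bigr (fun y => if y == z then g y else 0)) => [|y _].
  rewrite -big_mkcond sum_pred1_seq //; case: ifP => // zs.
  by apply/eqP; apply: contraFT zs; rewrite eq_sym; apply: cs.
by case: (eqVneq (g y) 0) => [->|/hid->]; rewrite ?if_same.
Qed.

Lemma supp_sub Y (g1 g2 : Y -> A) y : (g1 - g2) y != 0 -> g1 y != 0 \/ g2 y != 0.
Proof.
case: (eqVneq (g1 y) 0) => [g1y nz|]; last by left.
by right; apply: contraNneq nz => g2y; rewrite subfE g1y g2y subrr.
Qed.

Lemma fin_supp_sub Y (g1 g2 : Y -> A) : fin_supp g1 -> fin_supp g2 -> fin_supp (g1 - g2).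
Proof.
case=> s1 c1 [s2 c2]; exists (s1 ++ s2) => y /supp_sub[/c1|/c2] ys.
  by rewrite mem_cat ys.
by rewrite mem_cat ys orbT.
Qed.

Lemma push_sub Y Z (h : Y -> Z) z0 (g1 g2 : Y -> A) : fin_supp g1 -> fin_supp g2 ->
  push h z0 (g1 - g2) = push h z0 g1 - push h z0 g2.
Proof.
move=> /covP [_ c1] /covP [_ c2]; set s := undup (cov g1 ++ cov g2).
have cov_any (g : Y -> A) : (forall y, g y != 0 -> g1 y != 0 \/ g2 y != 0) -> covers g s.
  by move=> gP; apply: covers_undup => y /gP[/c1 yc|/c2 yc]; rewrite mem_cat yc ?orbT.
have s1 : covers g1 s by apply: cov_any; left.
have s2 : covers g2 s by apply: cov_any; right.
have s12 : covers (g1 - g2) s by apply: cov_any => y /supp_sub.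
rewrite (push_psum _ _ s12) (push_psum _ _ s1) (push_psum _ _ s2).
apply/funext=> z; rewrite /psum !fctE /=; case: ifP => _; first by rewrite subrr.
by rewrite sumrB.
Qed.

Lemma push0 Y Z (h : Y -> Z) z0 : push h z0 (0 : Y -> A) = 0.
Proof. by apply/funext=> z; rewrite /push /psum; case: ifP => // _; rewrite big1. Qed.

Lemma push_in (S : A -> Prop) Y Z (h : Y -> Z) z0 (g : Y -> A) z :
  subgrp S -> (forall y, S (g y)) -> S (push h z0 g z).
Proof. by move=> sS Sg; rewrite /push /psum; case: ifP => _; [apply: sg0 | apply: sg_sum]. Qed.

End Pushforward.

Section PushMorphism.
Variables (A B : zmodType) (phi : {additive A -> B}).
Implicit Types (Y Z : eqType).

Lemma covers_comp Y (g : Y -> A) s : covers g s -> covers (phi \o g) s.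
Proof.
case=> us gs; split=> // y nz; apply: gs.
by apply: contraNneq nz => /= ->; rewrite raddf0.
Qed.

Lemma fin_supp_comp Y (g : Y -> A) : fin_supp g -> fin_supp (phi \o g).
Proof. by move=> /covP /covers_comp /fin_supp_covers. Qed.

Lemma push_morph Y Z (h : Y -> Z) z0 (g : Y -> A) :
  fin_supp g -> push h z0 (phi \o g) = phi \o push h z0 g.
Proof.
move=> /covP gc; rewrite (push_psum _ _ (covers_comp gc)); apply/funext=> z.
by rewrite /push /psum /=; case: ifP => _; rewrite ?raddf0 ?raddf_sum.
Qed.

Definition postcomp (I : Type) (g : I -> A) : I -> B := phi \o g.

Lemma postcomp_is_zmod_morphism (I : Type) : zmod_morphism (@postcomp I).
Proof. by move=> g1 g2; apply/funext=> i; rewrite /postcomp !fctE /= raddfB. Qed.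

HB.instance Definition _ (I : Type) :=
  GRing.isZmodMorphism.Build (I -> A) (I -> B) (@postcomp I) (@postcomp_is_zmod_morphism I).

End PushMorphism.

Definition natmul_by (V : zmodType) (m : nat) (a : V) : V := a *+ m.

Lemma natmul_by_is_zmod_morphism (V : zmodType) m : zmod_morphism (@natmul_by V m).
Proof. by move=> x y; rewrite /natmul_by mulrnBl. Qed.

HB.instance Definition _ (V : zmodType) m :=
  GRing.isZmodMorphism.Build V V (@natmul_by V m) (@natmul_by_is_zmod_morphism V m).

Section LimitGroups.
Variables (d : Order.disp_t) (T : porderType d) (X : T -> eqType) (pt : forall t, X t)
  (f : forall t s : T, (s <= t)%O -> X t -> X s).

Lemma comp_atB (A : zmodType) (g1 g2 : {t : T & X t} -> A) t :
  comp_at (g1 - g2) t = comp_at g1 t - comp_at g2 t.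
Proof. by []. Qed.

Lemma comp_atBE (A : zmodType) (g1 g2 : {t : T & X t} -> A) t y :
  comp_at (g1 - g2) t y = comp_at g1 t y - comp_at g2 t y.
Proof. by []. Qed.

Lemma G_predP (A : zmodType) (g : {t : T & X t} -> A) :
  G_pred pt f g <-> (forall t, smash_elt (pt t) (comp_at g t)) /\
    (forall t s (h : (s <= t)%O), comp_at g s = push (f h) (pt s) (comp_at g t)).
Proof.
split=> -[sm P]; split=> // t s h; apply/(pushesP _ _ _ (sm t).2); exact: P.
Qed.

Lemma G_subgrp (A : zmodType) : subgrp (G_pred pt f (A:=A)).
Proof.
split.
  apply/G_predP; split=> [t|t s h]; first by split=> //; exists [::] => y; rewrite eqxx.
  by rewrite push0.
move=> g1 g2 /G_predP[sm1 P1] /G_predP[sm2 P2]; apply/G_predP.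
have fin1 t := (sm1 t).2; have fin2 t := (sm2 t).2.
split=> [t|t s h]; last by rewrite !comp_atB push_sub // -P1 -P2.
by split; [rewrite comp_atBE (sm1 t).1 (sm2 t).1 subrr | apply: fin_supp_sub].
Qed.

Lemma G_morph (A B : zmodType) (phi : {additive A -> B}) g :
  G_pred pt f g -> G_pred pt f (phi \o g).
Proof.
move=> /G_predP[sm P]; apply/G_predP.
have comp_atE t : comp_at (phi \o g) t = phi \o comp_at g t by [].
split=> [t|t s h]; rewrite !comp_atE; last by rewrite push_morph -?P //; case: (sm t).
by split; [rewrite /= (sm t).1 raddf0 | apply: fin_supp_comp; case: (sm t)].
Qed.

Lemma K_subgrp (A : zmodType) : subgrp (K_pred pt f (A:=A)).
Proof.
split.
  by split; [exact: (sg0 (G_subgrp A)) | exists [::]; split=> // t y; rewrite big_nil if_same].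
move=> g1 g2 [G1 [l1 [L1 E1]]] [G2 [l2 [L2 E2]]]; split; first exact: (sgB (G_subgrp A)).
exists (l1 ++ [seq (i.1, - i.2) | i <- l2]); split.
  by move=> i; rewrite List.in_app_iff List.in_map_iff => -[/L1|[j [<- /L2]]].
move=> t y; rewrite comp_atB !fctE /= E1 E2.
by case: eqP => _; rewrite ?subrr // big_cat big_map sumrN.
Qed.

Lemma K_morph (A B : zmodType) (phi : {additive A -> B}) g :
  K_pred pt f g -> K_pred pt f (phi \o g).
Proof.
move=> [Gg [l [L E]]]; split; first exact: G_morph.
exists [seq (i.1, phi i.2) | i <- l]; split.
  by move=> i; rewrite List.in_map_iff => -[j [<- /L]].
move=> t y; rewrite -[LHS]/(phi (comp_at g t y)) E big_map.
by case: eqP => _; rewrite ?raddf0 ?raddf_sum.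
Qed.

End LimitGroups.

Section Tower.
Variables (d : Order.disp_t) (T : porderType d) (X : T -> eqType) (pt : forall t, X t)
  (f : forall t s : T, (s <= t)%O -> X t -> X s) (A : zmodType).
Hypothesis pdX : pointed_diagram pt f.

Lemma f_pt t s (h : (s <= t)%O) : f h (pt t) = pt s.
Proof. by case: pdX. Qed.

Lemma f_id t (h : (t <= t)%O) y : f h y = y.
Proof. by case: pdX => _ ->. Qed.

Lemma f_comp t r s (h1 : (r <= t)%O) (h2 : (s <= r)%O) (h3 : (s <= t)%O) :
  f h2 \o f h1 = f h3.
Proof. by apply/funext=> y /=; case: pdX => _ _ ->. Qed.

Lemma push_f_comp t r s (h1 : (r <= t)%O) (h2 : (s <= r)%O) (h3 : (s <= t)%O) (g : X t -> A) :
  fin_supp g -> push (f h2) (pt s) (push (f h1) (pt r) g) = push (f h3) (pt s) g.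
Proof. by move=> gf; rewrite push_comp ?f_pt // (f_comp h1 h2 h3). Qed.

Variables (u : nat -> T) (u_step : forall n, (u n <= u n.+1)%O).
Hypothesis u_cof : forall t, exists n, (t <= u n)%O.

Lemma u_mono n k : (n <= k)%N -> (u n <= u k)%O.
Proof.
move=> nk; rewrite -(subnK nk); elim: (k - n)%N => [|j IH] //=.
exact: le_trans IH (u_step _).
Qed.

Variable H : forall n, X (u n) -> A.
Arguments H : clear implicits.
Hypothesis H_compat : forall n, push (f (u_step n)) (pt (u n)) (H n.+1) = H n.

(* Each [H n] is a pushforward, hence finitely supported. *)
Lemma H_fin n : fin_supp (H n).
Proof. by rewrite -H_compat; apply: push_fin. Qed.

Lemma H_le n k (nk : (n <= k)%N) (h : (u n <= u k)%O) : push (f h) (pt (u n)) (H k) = H n.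
Proof.
move: h; rewrite -(subnK nk) => h; elim: (k - n)%N h => [|j IH] h.
  apply: push_id_on => [||y _]; [exact: H_fin | by rewrite -H_compat push_pt | exact: f_id].
have hj : (u n <= u (j + n))%O by apply: u_mono; apply: leq_addl.
by rewrite -(IH hj) -(H_compat (j + n)) push_f_comp //; apply: H_fin.
Qed.

Lemma H_push t n k (hn : (t <= u n)%O) (hk : (t <= u k)%O) :
  push (f hn) (pt t) (H n) = push (f hk) (pt t) (H k).
Proof.
wlog nk : n k hn hk / (n <= k)%N.
  by move=> wl; case: (leqP n k) => [|/ltnW] nk; [|symmetry]; apply: wl.
have hnk := u_mono nk.
by rewrite -(H_le nk hnk) push_f_comp //; apply: H_fin.
Qed.

Definition level (t : T) : nat := projT1 (cid (u_cof t)).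

Lemma level_le t : (t <= u (level t))%O.
Proof. exact: projT2 (cid (u_cof t)). Qed.

Definition tower_lim : {t : T & X t} -> A :=
  fun p => push (f (level_le (projT1 p))) (pt _) (H (level (projT1 p))) (projT2 p).

Lemma tower_limE t n (h : (t <= u n)%O) : comp_at tower_lim t = push (f h) (pt t) (H n).
Proof. by rewrite -(H_push (level_le t)). Qed.

Lemma tower_lim_G : G_pred pt f tower_lim.
Proof.
apply/G_predP; split=> [t|t s h].
  by rewrite (tower_limE (level_le t)); split; [apply: push_pt | apply: push_fin].
have hs := le_trans h (level_le t).
by rewrite (tower_limE hs) (tower_limE (level_le t)) (push_f_comp _ _ hs) //; apply: H_fin.
Qed.

End Tower.

Section MittagLefflerTower.
Variables (d : Order.disp_t) (T : porderType d) (X : T -> eqType) (pt : forall t, X t)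
  (f : forall t s : T, (s <= t)%O -> X t -> X s).
Hypotheses (cT : countable_type T) (dT : directed T) (pdX : pointed_diagram pt f)
  (mlX : mittag_leffler f).

Let ub (s t : T) : T := projT1 (cid (dT.2 s t)).
Let ub_l s t : (s <= ub s t)%O. Proof. by case: (projT2 (cid (dT.2 s t))). Qed.
Let ub_r s t : (t <= ub s t)%O. Proof. by case: (projT2 (cid (dT.2 s t))). Qed.

Let T_inhabited : exists t : T, True. Proof. by case: dT => [[t]] _; exists t. Qed.
Let t0 : T := projT1 (cid T_inhabited).

Let code : T -> nat := projT1 (cid cT).
Let enum_t (n : nat) : T :=
  if pselect (exists t, code t = n) is left P then projT1 (cid P) else t0.
Let enum_tE t : enum_t (code t) = t.
Proof.
rewrite /enum_t; case: pselect => [P|[]]; last by exists t.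
exact: (projT2 (cid cT)) (projT2 (cid P)).
Qed.

Let ml (t : T) : T := projT1 (cid (mlX t)).
Let ml_ge t : (t <= ml t)%O. Proof. by case: (projT2 (cid (mlX t))). Qed.
Let ml_stable t r (hr : (ml t <= r)%O) (htr : (t <= r)%O) (y : X t) :
  image_of (f htr) y <-> image_of (f (ml_ge t)) y.
Proof.
case: (projT2 (cid (mlX t))) => hst P; rewrite (P r hr htr y).
by rewrite (bool_irrelevance hst (ml_ge t)).
Qed.

(* The tower: each step passes the stabilisation index of the previous
   level and the [n]-th element of [T]. *)
Let u : nat -> T := nat_rect (fun=> T) t0 (fun n t => ub (ub t (ml t)) (enum_t n)).
Let u_step n : (u n <= u n.+1)%O. Proof. exact: le_trans (ub_l _ _) (ub_l _ _). Qed.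
Let u_ml n : (ml (u n) <= u n.+1)%O. Proof. exact: le_trans (ub_r _ _) (ub_l _ _). Qed.

Let u_cof t : exists n, (t <= u n)%O.
Proof. by exists (code t).+1; rewrite /= -{1}(enum_tE t); apply: ub_r. Qed.

Let u_surj n (y : X (u n)) : image_of (f (u_step n)) y ->
  exists2 z, image_of (f (u_step n.+1)) z & f (u_step n) z = y.
Proof.
have h := le_trans (u_step n) (u_step n.+1).
rewrite (ml_stable (u_ml n)) -(ml_stable (le_trans (u_ml n) (u_step n.+1)) h).
move=> [w <-]; exists (f (u_step n.+1) w); first by exists w.
by rewrite -(f_comp pdX (u_step n.+1) (u_step n) h).
Qed.

Lemma ml_tower : exists (u : nat -> T) (u_step : forall n, (u n <= u n.+1)%O),
  (forall t, exists n, (t <= u n)%O) /\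
  forall n (y : X (u n)), image_of (f (u_step n)) y ->
    exists2 z, image_of (f (u_step n.+1)) z & f (u_step n) z = y.
Proof. by exists u, u_step; split; [apply: u_cof | apply: u_surj]. Qed.

End MittagLefflerTower.

Section Division.
Variables (d : Order.disp_t) (T : porderType d) (X : T -> eqType) (pt : forall t, X t)
  (f : forall t s : T, (s <= t)%O -> X t -> X s) (A : zmodType).
Hypothesis pdX : pointed_diagram pt f.
Variables (u : nat -> T) (u_step : forall n, (u n <= u n.+1)%O).
Hypotheses (u_cof : forall t, exists n, (t <= u n)%O)
  (u_surj : forall n (y : X (u n)), image_of (f (u_step n)) y ->
     exists2 z, image_of (f (u_step n.+1)) z & f (u_step n) z = y).
Variables (S : A -> Prop) (m : nat).
Hypotheses (sS : subgrp S) (divS : sq_ndiv m S (@zero_sg A)).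
Variable g : {t : T & X t} -> A.
Hypotheses (Gg : G_pred pt f g) (Sg : forall p, S (g p)).

Local Notation F n := (f (u_step n)).
Local Notation gn n := (comp_at g (u n)).

Definition stable n : X (u n) -> Prop := image_of (F n).
Arguments stable : clear implicits.

Lemma g_compat n : push (F n) (pt (u n)) (gn n.+1) = gn n.
Proof. by case/G_predP: Gg => _ P; rewrite -P. Qed.

Lemma g_supp n (y : X (u n)) : gn n y != 0 -> stable n y.
Proof. by rewrite -g_compat => /push_supp [z [_ <- _]]; exists z. Qed.

Definition root (a : A) : A :=
  if a == 0 then 0 else
  if pselect (exists b, S b /\ a = b *+ m) is left P then projT1 (cid P) else 0.

Lemma root0 : root 0 = 0. Proof. by rewrite /root eqxx. Qed.

Lemma rootP a : S a -> S (root a) /\ root a *+ m = a.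
Proof.
move=> Sa; rewrite /root; case: eqP => [->|_]; first by rewrite mul0rn; split; [apply: sg0|].
case: pselect => [P|[]]; first by case: (projT2 (cid P)).
by case: (divS Sa) => b [Sb /eqP]; rewrite subr_eq0 => /eqP ->; exists b.
Qed.

Definition admissible n (h : X (u n) -> A) : Prop :=
  [/\ fin_supp h, h (pt (u n)) = 0, forall y, h y != 0 -> stable n y,
      forall y, S (h y) & natmul_by m \o h = gn n].
Arguments admissible : clear implicits.

Lemma root_supp n (y : X (u n)) : root (gn n y) != 0 -> gn n y != 0.
Proof. by apply: contraNneq => ->; rewrite root0. Qed.

Lemma root_admissible n : admissible n (root \o gn n).
Proof.
have [g0 [s gs]] := Gg.1 (u n).
split.
- by exists s => y /root_supp /gs.
- by rewrite /= g0 root0.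
- by move=> y /root_supp /g_supp.
- by move=> y; exact: (rootP (Sg _)).1.
- by apply/funext=> y; exact: (rootP (Sg _)).2.
Qed.

Definition sect n (y : X (u n)) : X (u n.+1) :=
  if pselect (exists2 z, stable n.+1 z & F n z = y) is left P then s2val (cid2 P)
  else pt (u n.+1).
Arguments sect : clear implicits.

Lemma sectP n (y : X (u n)) : stable n y -> stable n.+1 (sect n y) /\ F n (sect n y) = y.
Proof.
move=> /u_surj P; rewrite /sect; case: pselect => // Q.
by split; [apply: (s2valP (cid2 Q)) | apply: (s2valP' (cid2 Q))].
Qed.

Definition torsS (a : A) : Prop := S a /\ a *+ m = 0.

Lemma torsS_subgrp : subgrp torsS.
Proof.
split; first by split; [apply: sg0 | rewrite mul0rn].
by move=> a b [Sa ma] [Sb mb]; split; [apply: sgB | rewrite mulrnBl ma mb subrr].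
Qed.

Lemma lift_torsion n (e : X (u n) -> A) :
  fin_supp e -> e (pt (u n)) = 0 -> (forall y, e y != 0 -> stable n y) ->
  (forall y, torsS (e y)) ->
  exists e' : X (u n.+1) -> A, [/\ fin_supp e', e' (pt (u n.+1)) = 0,
    forall z, e' z != 0 -> stable n.+1 z, forall z, torsS (e' z) &
    push (F n) (pt (u n)) e' = e].
Proof.
move=> efin e0 est etors; exists (push (sect n) (pt (u n.+1)) e); split.
- exact: push_fin.
- exact: push_pt.
- by move=> z /push_supp [y [_ <- /est /sectP []]].
- by move=> z; apply: push_in => //; apply: torsS_subgrp.
rewrite push_comp ?(f_pt pdX) //; apply: push_id_on => // y /est /sectP [] //.
Qed.

Lemma lift n h : admissible n h ->
  exists2 h', admissible n.+1 h' & push (F n) (pt (u n)) h' = h.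
Proof.
move=> [hfin h0 hst hS hm]; have [kfin k0 kst kS km] := root_admissible n.+1.
set k := root \o gn n.+1 in kfin k0 kst kS km *.
set e := push (F n) (pt (u n)) k - h.
have etors y : torsS (e y).
  split; first by apply: sgB => //; apply: push_in.
  rewrite mulrnBl -[_ *+ m]/((natmul_by m \o _) y) -[h y *+ m]/((natmul_by m \o h) y).
  by rewrite -push_morph // km hm g_compat subrr.
have [||y|e' [e'fin e'0 e'st e'tors e'P]] := lift_torsion _ _ _ etors.
- exact: fin_supp_sub (push_fin _ _ _) hfin.
- by rewrite /e subfE push_pt h0 subrr.
- rewrite /e subfE; case: (eqVneq (h y) 0) => [->|/hst//]; rewrite subr0.
  by move=> /push_supp [z [_ <- _]]; exists z.
exists (k - e'); last by rewrite push_sub // e'P /e opprB addrC subrK.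
split.
- exact: fin_supp_sub.
- by rewrite subfE k0 e'0 subrr.
- move=> z; rewrite subfE; case: (eqVneq (k z) 0) => [->|/kst//].
  by rewrite sub0r oppr_eq0 => /e'st.
- by move=> z; apply: sgB => //; case: (e'tors z).
- apply/funext=> z /=; rewrite subfE raddfB [X in _ - X = _](e'tors z).2 subr0.
  by rewrite -km.
Qed.

Definition lift_step n (h : X (u n) -> A) : X (u n.+1) -> A :=
  if pselect (exists2 h', admissible n.+1 h' & push (F n) (pt (u n)) h' = h) is left P
  then s2val (cid2 P) else 0.
Arguments lift_step : clear implicits.

Fixpoint root_tower n : X (u n) -> A :=
  match n as n0 return X (u n0) -> A with
  | 0 => root \o gn 0
  | n'.+1 => lift_step n' (@root_tower n')
  end.
Arguments root_tower : clear implicits.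

Lemma root_towerP n : admissible n (root_tower n) /\
  push (F n) (pt (u n)) (root_tower n.+1) = root_tower n.
Proof.
have step k (h : X (u k) -> A) : admissible k h ->
    admissible k.+1 (lift_step k h) /\ push (F k) (pt (u k)) (lift_step k h) = h.
  move=> /lift hP; rewrite /lift_step; case: pselect => // P.
  by split; [apply: (s2valP (cid2 P)) | apply: (s2valP' (cid2 P))].
have adm k : admissible k (root_tower k).
  by elim: k => [|k IH]; [apply: root_admissible | apply: (step _ _ IH).1].
by split; [apply: adm | apply: (step _ _ (adm n)).2].
Qed.

Lemma G_root_tower : exists h, [/\ G_pred pt f h, forall p, S (h p) & g = h *+ m].
Proof.
have adm n := (root_towerP n).1.
exists (tower_lim pt f u_cof root_tower); split.
- apply: (tower_lim_G (u_step := u_step) pdX u_cof) => n; exact: (root_towerP n).2.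
- by case=> t y; apply: push_in => // z; case: (adm (level u_cof t)).
apply/funext=> -[t y]; rewrite natmulfctE /=.
have [_ Pg] := (G_predP _ _ _).1 Gg; have [fin _ _ _ root_m] := adm (level u_cof t).
by rewrite -[g _]/(comp_at g t y) (Pg _ _ (level_le u_cof t)) -root_m push_morph.
Qed.

End Division.

Lemma G_root (d : Order.disp_t) (T : porderType d) (X : T -> eqType) (pt : forall t, X t)
    (f : forall t s : T, (s <= t)%O -> X t -> X s) (A : zmodType) (S : A -> Prop) (m : nat) :
  countable_type T -> directed T -> pointed_diagram pt f -> mittag_leffler f ->
  subgrp S -> sq_ndiv m S (@zero_sg A) ->
  forall g, G_pred pt f g -> (forall p, S (g p)) ->
  exists h, [/\ G_pred pt f h, forall p, S (h p) & g = h *+ m].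
Proof.
move=> cT dT pdX mlX sS divS g Gg Sg.
have [u [u_step [u_cof u_surj]]] := ml_tower cT dT pdX mlX.
exact: (G_root_tower pdX u_cof u_surj sS divS Gg Sg).
Qed.

Section ProjectionCriterion.
Variables (V : zmodType) (G K : V -> Prop) (pi : {additive V -> V}).
Hypotheses (sG : subgrp G) (sK : subgrp K) (KG : forall x, K x -> G x)
  (piG : forall x, G x -> G (pi x)) (piK : forall x, K x -> K (pi x))
  (pi_idem : forall x, pi (pi x) = pi x)
  (pi_div : forall n, (0 < n)%N -> forall x, G x -> pi x = x ->
     exists h, [/\ G h, pi h = h & x = h *+ n])
  (pi_bnd : exists2 n, (0 < n)%N & forall x, G x -> pi x = 0 -> x *+ n = 0).

Definition plusK (P : V -> Prop) : V -> Prop := fun x => exists a k, [/\ P a, K k & x = a + k].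

Lemma subgrp_plusK P : subgrp P -> subgrp (plusK P).
Proof.
move=> sP; split; first by exists 0, 0; rewrite addr0; split=> //; apply: sg0.
move=> x y [a1 [k1 [Pa1 Kk1 ->]]] [a2 [k2 [Pa2 Kk2 ->]]].
exists (a1 - a2), (k1 - k2); rewrite opprD addrACA.
by split; [apply: (sgB sP) | apply: (sgB sK) | ].
Qed.

Lemma plusK_K P x : subgrp P -> K x -> plusK P x.
Proof. by move=> sP Kx; exists 0, x; rewrite add0r; split=> //; apply: sg0. Qed.

Lemma plusK_G P x : (forall a, P a -> G a) -> plusK P x -> G x.
Proof. by move=> PG [a [k [/PG Ga /KG Gk ->]]]; apply: sgD. Qed.

Definition imG (x : V) : Prop := G x /\ pi x = x.
Definition kerG (x : V) : Prop := G x /\ pi x = 0.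

Lemma subgrp_imG : subgrp imG.
Proof.
split; first by split; [apply: sg0 | rewrite raddf0].
by move=> x y [Gx px] [Gy py]; split; [apply: sgB | rewrite raddfB px py].
Qed.

Lemma subgrp_kerG : subgrp kerG.
Proof.
split; first by split; [apply: sg0 | rewrite raddf0].
by move=> x y [Gx px] [Gy py]; split; [apply: sgB | rewrite raddfB px py subrr].
Qed.

(* [x = pi x + (x - pi x)] splits [G] into image and kernel. *)
Lemma im_ker_decomp x : G x -> exists a b, [/\ plusK imG a, plusK kerG b & x = a + b].
Proof.
move=> Gx; exists (pi x + 0), (x - pi x + 0); split; last by rewrite !addr0 [RHS]addrC subrK.
- by exists (pi x), 0; split=> //; [split=> //; exact: piG | exact: sg0].
- exists (x - pi x), 0; split=> //; last exact: sg0.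
  by split; [apply: sgB => //; exact: piG | rewrite raddfB pi_idem subrr].
Qed.

(* The two summands meet in [K]: if [a + k1 = b + k2], then [a = pi (k2 - k1)]. *)
Lemma im_ker_meet x : plusK imG x -> plusK kerG x -> K x.
Proof.
move=> [a [k1 [[Ga pa] Kk1 ->]]] [b [k2 [[Gb pb] Kk2 Eab]]].
have kab : k2 - k1 = a - b by apply/eqP; rewrite subr_eq addrAC Eab addrAC subrr add0r.
have -> : a = pi (k2 - k1) by rewrite kab raddfB pa pb subr0.
by apply: sgD => //; apply: piK; apply: sgB.
Qed.

(* [G/K = (im pi + K)/K (+) (ker pi + K)/K], divisible and bounded. *)
Lemma almost_div_of_projection : sq_almost_div G K.
Proof.
have [sD sB] := (subgrp_plusK subgrp_imG, subgrp_plusK subgrp_kerG).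
exists (plusK imG), (plusK kerG); do 2!split=> //.
split; first by move=> x Kx; split; [apply: (plusK_K subgrp_imG) | apply: (plusK_K subgrp_kerG)].
split; first by move=> x; apply: plusK_G => a [].
split; first by move=> x; apply: plusK_G => a [].
split; first exact: im_ker_decomp.
split; first exact: im_ker_meet.
split.
  move=> n n0 _ [a [k [[Ga pa] Kk ->]]]; have [h [Gh ph ->]] := pi_div n0 Ga pa.
  exists h; split; last by rewrite addrAC subrr add0r.
  by exists h, 0; rewrite addr0; split=> //; apply: sg0.
have [n n0 bnd] := pi_bnd; exists n; split=> // _ [b [k [[Gb pb] Kk ->]]].
by rewrite mulrnDl bnd // add0r; apply: sgMn.
Qed.

End ProjectionCriterion.

Section DirectSumProjection.
Variables (A : zmodType) (DA BA : A -> Prop).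
Hypotheses (sD : subgrp DA) (sB : subgrp BA)
  (dec : forall a, exists d b, [/\ DA d, BA b & a = d + b])
  (DB0 : forall x, DA x -> BA x -> x = 0).

Let dec' a : exists d, DA d /\ BA (a - d).
Proof. by case: (dec a) => d [b [Dd Bb ->]]; exists d; rewrite addrC addKr. Qed.

Definition dproj (a : A) : A := projT1 (cid (dec' a)).

(* [dproj a] is the unique such [d]; hence [dproj] is additive. *)
Lemma dprojD a : DA (dproj a). Proof. by case: (projT2 (cid (dec' a))). Qed.
Lemma dprojB a : BA (a - dproj a). Proof. by case: (projT2 (cid (dec' a))). Qed.

Lemma dproj_uniq a d : DA d -> BA (a - d) -> dproj a = d.
Proof.
move=> Dd Bd; apply/eqP; rewrite -subr_eq0; apply/eqP/DB0; first by apply: sgB => //; apply: dprojD.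
have -> : dproj a - d = (a - d) - (a - dproj a) by rewrite opprB [RHS]addrC addrA subrK.
by apply: sgB => //; apply: dprojB.
Qed.

Lemma dproj_sub : zmod_morphism dproj.
Proof.
move=> a b; apply: dproj_uniq; first by apply: sgB => //; apply: dprojD.
have -> : a - b - (dproj a - dproj b) = (a - dproj a) - (b - dproj b).
  by rewrite !opprB addrACA [RHS]addrACA (addrC (- b)).
by apply: sgB => //; apply: dprojB.
Qed.

HB.instance Definition _ := GRing.isZmodMorphism.Build A A dproj dproj_sub.

Lemma dproj_id a : DA a -> dproj a = a.
Proof. by move=> Da; apply: dproj_uniq => //; rewrite subrr; apply: sg0. Qed.

Lemma dproj_ker a : dproj a = 0 -> BA a.
Proof. by move=> pa; have := dprojB a; rewrite pa subr0. Qed.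

Lemma direct_sum_projection : exists pi : {additive A -> A},
  [/\ forall a, DA (pi a), forall a, DA a -> pi a = a & forall a, pi a = 0 -> BA a].
Proof. by exists dproj; split; [apply: dprojD | apply: dproj_id | apply: dproj_ker]. Qed.

End DirectSumProjection.

Section MainResults.
Variables (d : Order.disp_t) (T : porderType d) (X : T -> eqType) (pt : forall t, X t)
  (f : forall t s : T, (s <= t)%O -> X t -> X s) (A : zmodType).
Hypotheses (cT : countable_type T) (dT : directed T) (pdX : pointed_diagram pt f)
  (mlX : mittag_leffler f).

Local Notation GP := (G_pred pt f (A:=A)).
Local Notation KP := (K_pred pt f (A:=A)).

Lemma G_ndiv m : sq_ndiv m (@whole A) (@zero_sg A) ->
  sq_ndiv m GP (@zero_sg _) /\ sq_ndiv m GP KP.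
Proof.
move=> divA; have root g : GP g -> exists h, GP h /\ g = h *+ m.
  move=> Gg; have [h [Gh _ ->]] := G_root cT dT pdX mlX (subgrp_whole A) divA Gg (fun=> I).
  by exists h.
split=> g /root [h [Gh ->]]; exists h; split=> //; rewrite subrr //.
exact: sg0 (K_subgrp _ _ _).
Qed.

(* Almost divisibility of [A] passes to [G(X,A)] and to [H(X,A)]: project
   pointwise onto the divisible summand of [A]. *)
Lemma G_almost_div : almost_divisible A ->
  sq_almost_div GP (@zero_sg _) /\ sq_almost_div GP KP.
Proof.
case=> [DA [BA [sD [sB [_ [_ [_ [dec [DB0 [divD [n [n0 bndB]]]]]]]]]]]].
have [pi [piD pi_id pi_ker]] := direct_sum_projection sD sB (fun a => dec a I) DB0.
pose P := postcomp pi (I := {t : T & X t}).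
have P_idem g : P (P g) = P g by apply/funext=> p; rewrite /P /postcomp /= pi_id.
have P_div k (k0 : (0 < k)%N) g : GP g -> P g = g -> exists h, [/\ GP h, P h = h & g = h *+ k].
  move=> Gg Pg; have Dg p : DA (g p) by rewrite -Pg; apply: piD.
  have [h [Gh Dh ->]] := G_root cT dT pdX mlX sD (divD k k0) Gg Dg.
  by exists h; split=> //; apply/funext=> p; apply: pi_id.
have P_bnd : exists2 n, (0 < n)%N & forall g, GP g -> P g = 0 -> g *+ n = 0.
  exists n => // g _ Pg; apply/funext=> p; rewrite natmulfctE; apply/bndB/pi_ker.
  by move: (congr1 (fun h => h p) Pg).
have PG g : GP g -> GP (P g) by apply: G_morph.
split; apply: (almost_div_of_projection (pi := P)) => //; try exact: G_subgrp.
- exact: subgrp_zero.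
- by move=> g ->; apply: sg0 (G_subgrp _ _ _).
- by move=> g ->; rewrite raddf0.
- exact: K_subgrp.
- by move=> g [].
- by move=> g; apply: K_morph.
Qed.

End MainResults.

Theorem mainTheorem14 (d : Order.disp_t) (T : porderType d)
  (X : T -> eqType) (pt : forall t, X t)
  (f : forall t s : T, (s <= t)%O -> X t -> X s) (A : zmodType) :
  countable_type T -> directed T -> pointed_diagram pt f ->
  mittag_leffler f ->
  [/\ (forall p : nat, prime p -> p_divisible A p ->
         sq_ndiv p (G_pred pt f (A:=A)) (@zero_sg _) /\
         sq_ndiv p (G_pred pt f (A:=A)) (K_pred pt f (A:=A))),
      (divisible A ->
         sq_div (G_pred pt f (A:=A)) (@zero_sg _) /\
         sq_div (G_pred pt f (A:=A)) (K_pred pt f (A:=A))) &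
      (almost_divisible A ->
         sq_almost_div (G_pred pt f (A:=A)) (@zero_sg _) /\
         sq_almost_div (G_pred pt f (A:=A)) (K_pred pt f (A:=A)))].
Proof.
move=> cT dT pdX mlX; split.
- by move=> p _; apply: G_ndiv.
- by move=> divA; split=> n n0; have [] := G_ndiv cT dT pdX mlX (divA n n0).
- exact: G_almost_div.
Qed.
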